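(* Let $w$ be a Coxeter element of an irreducible euclidean Coxeter group $W$ acting on the euclidean space $E$ with vector space of translations $V$. Then $w$ is a hyperbolic isometry of $E$, its move-set is a nonlinear affine hyperplane in $V$, and its min-set is a line in $E$. Moreover, any factorization of $w$ as the product of the elements of a simple system is a minimum length reflection factorization of $w$.
   Context: $W$ is generated by the reflections of an $n$-dimensional euclidean space $E$ in the facets of a euclidean $n$-simplex with dihedral angles submultiples of $\pi$, acting properly and cocompactly; a simple system is the set of reflections in the facets of a chamber (image of the simplex), and a Coxeter element is the product of the elements of a simple system in some order. For an isometry $u$ of $E$: its move-set $\mathrm{Mov}(u)\subset V$ is the set of vectors $\lambda$ with $u(x)=x+\lambda$ for some $x\in E$ (an affine subspace of $V$); $u$ is hyperbolic if it has no fixed points (equivalently $\mathrm{Mov}(u)$ does not contain $0$, i.e. is a nonlinear affine subspace); its min-set $\mathrm{Min}(u)$ is the set of points moved by the shortest vector in $\mathrm{Mov}(u)$. Reflection length refers to factorization into reflections of $E$. *)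

From HB Require Import structures.
From mathcomp Require Import all_boot all_order all_algebra fingroup perm.
From mathcomp Require Import classical_sets reals trigo.
Set Implicit Arguments.
Unset Strict Implicit.
Unset Printing Implicit Defensive.
Import Order.TTheory GRing.Theory Num.Theory.
Local Open Scope ring_scope.
Local Open Scope classical_set_scope.

(* The euclidean space E and its translation space V are both modelled by
   'rV[R]_n with the standard inner product. *)
Definition dotv (R : realType) (n : nat) (u v : 'rV[R]_n) : R := (u *m v^T) 0 0.

Definition refl (R : realType) (n : nat) (b : 'rV[R]_n) (d : R) : 'rV[R]_n -> 'rV[R]_n :=
  fun x => x - ((2 * (dotv x b - d)) / dotv b b) *: b.

Definition is_reflection (R : realType) (n : nat) (f : 'rV[R]_n -> 'rV[R]_n) : Prop :=
  exists b d, b != 0 /\ f = refl b d.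

Definition prodfun (R : realType) (n k : nat) (f : 'I_k -> 'rV[R]_n -> 'rV[R]_n)
  : 'rV[R]_n -> 'rV[R]_n :=
  foldr (fun i acc => f i \o acc) id (enum 'I_k).

(* The simplex C = {x | forall i, c i <= <x, a i>} (a i inward unit normals,
   one facet per i : 'I_n.+1) is a euclidean n-simplex whose dihedral angles
   are submultiples pi/m of pi (m = infinity, i.e. parallel facets with
   angle 0, is allowed; this only happens for n = 1). *)
Definition simplex_set (R : realType) (n : nat) (a : 'I_n.+1 -> 'rV[R]_n)
  (c : 'I_n.+1 -> R) : set 'rV[R]_n :=
  [set x | forall i, c i <= dotv x (a i)].

Definition coxeter_simplex (R : realType) (n : nat) (a : 'I_n.+1 -> 'rV[R]_n)
  (c : 'I_n.+1 -> R) : Prop :=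
  [/\ forall i, dotv (a i) (a i) = 1,
      exists x, forall i, c i < dotv x (a i),
      exists M : R, forall x, simplex_set a c x -> dotv x x <= M &
      forall i j, i != j ->
        (exists m : nat, (2 <= m)%N /\ dotv (a i) (a j) = - cos (pi / m%:R))
        \/ dotv (a i) (a j) = -1 ].

(* irreducibility: the Coxeter diagram is connected *)
Definition irreducible_simplex (R : realType) (n : nat) (a : 'I_n.+1 -> 'rV[R]_n) : Prop :=
  forall A : {set 'I_n.+1}, A != finset.set0 -> A != finset.setTfor 'I_n.+1 ->
    exists i j, [/\ i \in A, j \notin A & dotv (a i) (a j) != 0].

(* The group W generated by the reflections in the facets of the simplex
   (reflections are involutions, so the monoid they generate is the group). *)
Inductive inW (R : realType) (n : nat) (a : 'I_n.+1 -> 'rV[R]_n) (c : 'I_n.+1 -> R)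
  : ('rV[R]_n -> 'rV[R]_n) -> Prop :=
| inW_id : inW a c id
| inW_step (i : 'I_n.+1) (f : 'rV[R]_n -> 'rV[R]_n) :
    inW a c f -> inW a c (refl (a i) (c i) \o f).

(* s is a simple system: the reflections in the facets of a chamber g(C),
   g in W; s i is the reflection in the hyperplane spanned by the facet
   g(C \cap H_i), i.e. in g(H_i). *)
Definition simple_system (R : realType) (n : nat) (a : 'I_n.+1 -> 'rV[R]_n)
  (c : 'I_n.+1 -> R) (s : 'I_n.+1 -> 'rV[R]_n -> 'rV[R]_n) : Prop :=
  exists g, inW a c g /\
    forall i, exists b d, [/\ b != 0, s i = refl b d &
       [set x | dotv x b = d] = g @` [set x | dotv x (a i) = c i]].

Definition coxeter_element (R : realType) (n : nat) (a : 'I_n.+1 -> 'rV[R]_n)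
  (c : 'I_n.+1 -> R) (w : 'rV[R]_n -> 'rV[R]_n) : Prop :=
  exists s (p : 'S_n.+1), simple_system a c s /\ w = prodfun (fun i => s (p i)).

Definition Mov (R : realType) (n : nat) (u : 'rV[R]_n -> 'rV[R]_n) : set 'rV[R]_n :=
  [set u x - x | x in setT].

Definition hyperbolic (R : realType) (n : nat) (u : 'rV[R]_n -> 'rV[R]_n) : Prop :=
  forall x, u x != x.

Definition shortest_in (R : realType) (n : nat) (S : set 'rV[R]_n) (v : 'rV[R]_n) : Prop :=
  S v /\ forall l, S l -> dotv v v <= dotv l l.

Definition MinSet (R : realType) (n : nat) (u : 'rV[R]_n -> 'rV[R]_n) : set 'rV[R]_n :=
  [set x | shortest_in (Mov u) (u x - x)].

Definition nonlinear_affine_hyperplane (R : realType) (n : nat) (S : set 'rV[R]_n) : Prop :=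
  exists b d, [/\ b != 0, d != 0 & S = [set l | dotv l b = d]].

Definition is_line (R : realType) (n : nat) (S : set 'rV[R]_n) : Prop :=
  exists p v, v != 0 /\ S = [set p + t *: v | t in [set: R]].

From HB Require Import structures.
From mathcomp Require Import all_boot all_order all_algebra fingroup perm.
From mathcomp Require Import classical_sets reals trigo boolp.
From mathcomp Require Import ring lra zify.
Import Order.TTheory GRing.Theory Num.Theory.
Local Open Scope ring_scope.

(* Write the Coxeter element as w = s_(p 0) \o ... \o s_(p n), where s_i is the reflection in
   the hyperplane [dotv x (b i) = d i].  Since these hyperplanes bound an n-simplex, the
   augmented vectors (b i, - d i) form a basis of R^(n+1).  Steinberg's argument, based on
   x - w x = 2 \sum_i l_i b_i and \sum_i l_i (dotv x (b i) - d i) = |\sum_i l_i b_i|^2, then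
   shows that w has no fixed point and that its linear part fixes at most a line.  For an
   affine map with these two properties the move-set is a nonlinear affine hyperplane and the
   min-set is a line.  Finally, the move-set of a product of k reflections lies in the span
   of their normals; a nonlinear hyperplane spans V, so k >= n, and k = n would make the
   normals independent, so that the k hyperplanes would share a point fixed by w. *)

Section InnerProduct.
Context {R : realType} {n : nat}.
Implicit Types u v x : 'rV[R]_n.

Lemma dotvE u v : dotv u v = \sum_j u 0 j * v 0 j.
Proof. by rewrite /dotv mxE; apply: eq_bigr => j _; rewrite mxE. Qed.

Lemma dotvC u v : dotv u v = dotv v u.
Proof. by rewrite !dotvE; apply: eq_bigr => j _; rewrite mulrC. Qed.

Lemma dotvDl u u' v : dotv (u + u') v = dotv u v + dotv u' v.
Proof. by rewrite !dotvE -big_split; apply: eq_bigr => j _; rewrite mxE mulrDl. Qed.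

Lemma dotvZl k u v : dotv (k *: u) v = k * dotv u v.
Proof. by rewrite !dotvE mulr_sumr; apply: eq_bigr => j _; rewrite mxE mulrA. Qed.

Lemma dotvNl u v : dotv (- u) v = - dotv u v.
Proof. by rewrite -scaleN1r dotvZl mulN1r. Qed.

Lemma dotvBl u u' v : dotv (u - u') v = dotv u v - dotv u' v.
Proof. by rewrite dotvDl dotvNl. Qed.

Lemma dotv0l v : dotv 0 v = 0.
Proof. by rewrite -(scale0r 0) dotvZl mul0r. Qed.

Lemma dotvDr u v v' : dotv u (v + v') = dotv u v + dotv u v'.
Proof. by rewrite dotvC dotvDl !(dotvC u). Qed.

Lemma dotvZr k u v : dotv u (k *: v) = k * dotv u v.
Proof. by rewrite dotvC dotvZl dotvC. Qed.

Lemma dotvBr u v v' : dotv u (v - v') = dotv u v - dotv u v'.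
Proof. by rewrite dotvC dotvBl !(dotvC u). Qed.

Lemma dotv0r v : dotv v 0 = 0.
Proof. by rewrite dotvC dotv0l. Qed.

Lemma dotv_sumr (I : finType) u (f : I -> 'rV[R]_n) :
  dotv u (\sum_i f i) = \sum_i dotv u (f i).
Proof. exact: (big_morph (dotv u) (dotvDr u) (dotv0r u)). Qed.

Lemma dotv_sumZr (I : finType) x (l : I -> R) (f : I -> 'rV[R]_n) :
  dotv x (\sum_i l i *: f i) = \sum_i l i * dotv x (f i).
Proof. by rewrite dotv_sumr; apply: eq_bigr => i _; rewrite dotvZr. Qed.

Lemma dotv_sum_affine (I : finType) x (l : I -> R) (f : I -> 'rV[R]_n) (d : I -> R) :
  \sum_i l i * (dotv x (f i) - d i) = dotv x (\sum_i l i *: f i) - \sum_i l i * d i.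
Proof. by rewrite dotv_sumZr -sumrB; apply: eq_bigr => i _; rewrite mulrBr. Qed.

Lemma dotv_ge0 u : 0 <= dotv u u.
Proof. by rewrite dotvE; apply: sumr_ge0 => j _; rewrite -expr2 sqr_ge0. Qed.

Lemma dotv_eq0 u : (dotv u u == 0) = (u == 0).
Proof.
apply/eqP/eqP => [|->]; last exact: dotv0l.
rewrite dotvE => u0; apply/rowP => j; rewrite mxE; apply/eqP; rewrite -sqrf_eq0.
apply/eqP; move: j isT; apply/psumr_eq0P => [j _|]; first exact: sqr_ge0.
by rewrite -[RHS]u0; apply: eq_bigr => j _; rewrite expr2.
Qed.

Lemma dotv_gt0 u : (0 < dotv u u) = (u != 0).
Proof. by rewrite lt_def dotv_ge0 andbT dotv_eq0. Qed.

Lemma dotv_mulmx x (A : 'M[R]_n) y : dotv (x *m A) y = dotv x (y *m A^T).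
Proof. by rewrite /dotv trmx_mul trmxK mulmxA. Qed.

Lemma sub_kermx_tr u v : (u <= kermx v^T)%MS = (dotv u v == 0).
Proof.
apply/sub_kermxP/eqP => [uv0|uv0]; first by rewrite /dotv uv0 mxE.
by rewrite [u *m v^T]mx11_scalar -/(dotv u v) uv0 raddf0.
Qed.

Lemma dotv_orthD u v : dotv u v = 0 -> dotv (u + v) (u + v) = dotv u u + dotv v v.
Proof. by move=> uv0; rewrite !(dotvDl, dotvDr) (dotvC v u) uv0 !addr0 add0r. Qed.

Lemma shortest_in_hyperplane v c l : v != 0 ->
  shortest_in [set l | dotv l v = c] l <-> l = (c / dotv v v) *: v.
Proof.
move=> v0; have vv0 : dotv v v != 0 by rewrite dotv_eq0.
set mu := _ *: v.
have mu_in : dotv mu v = c by rewrite dotvZl mulfVK.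
have pythagoras l' : dotv l' v = c ->
    dotv l' l' = dotv mu mu + dotv (l' - mu) (l' - mu).
  move=> l'v; have orth : dotv (l' - mu) mu = 0.
    by rewrite dotvZr dotvBl l'v mu_in subrr mulr0.
  by rewrite -{1 2}(subrK mu l') (dotv_orthD _ _ orth) addrC.
split=> [[lv lmin]|->]; last first.
  split=> // l' /pythagoras ->; by rewrite lerDl dotv_ge0.
have := lmin _ mu_in; rewrite pythagoras // gerDl => le0.
by apply/eqP; rewrite -subr_eq0 -dotv_eq0 eq_le le0 dotv_ge0.
Qed.

End InnerProduct.

Section Reflections.
Context {R : realType} {n : nat}.
Implicit Types (b x : 'rV[R]_n) (d : R).

Definition reflmx b : 'M[R]_n := 1%:M - (2 / dotv b b) *: (b^T *m b).

Lemma reflE b d x : refl b d x = x *m reflmx b + (2 * d / dotv b b) *: b.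
Proof.
rewrite /refl mulmxBr mulmx1 -scalemxAr mulmxA [x *m b^T]mx11_scalar mul_scalar_mx -/(dotv x b).
rewrite scalerA -addrA; congr (_ + _); rewrite -!scaleNr -scalerDl; congr (_ *: _).
by rewrite /GRing.scale /=; ring.
Qed.

Lemma refl0E b x : refl b 0 x = x *m reflmx b.
Proof. by rewrite reflE mulr0 mul0r scale0r addr0. Qed.

Lemma refl_fix b d x : dotv x b = d -> refl b d x = x.
Proof. by move=> xb; rewrite /refl xb subrr mulr0 mul0r scale0r subr0. Qed.

Lemma reflK b d : b != 0 -> involutive (refl b d).
Proof.
rewrite -dotv_eq0 => bb0 x.
have flip : dotv (refl b d x) b - d = - (dotv x b - d).
  by rewrite /refl dotvBl dotvZl mulfVK //; ring.
by rewrite {1}/refl flip mulrN mulNr scaleNr opprK subrK.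
Qed.

End Reflections.

Section ReflectionProducts.
Context {R : realType} {n : nat} {I : finType} (b : I -> 'rV[R]_n).
Implicit Types (d : I -> R) (s : seq I) (x : 'rV[R]_n).

Definition refl_prod d s : 'rV[R]_n -> 'rV[R]_n :=
  foldr (fun i f => refl (b i) (d i) \o f) id s.

Definition reflmx_prod s : 'M[R]_n := foldr (fun i M => M *m reflmx (b i)) 1%:M s.

(* Half the coefficient of [b i] in [x - refl_prod d s x]; only meaningful for
   duplicate-free [s]. *)
Fixpoint refl_coef d s x : I -> R :=
  if s is i :: s' then fun j =>
    if j == i then (dotv (refl_prod d s' x) (b i) - d i) / dotv (b i) (b i)
    else refl_coef d s' x j
  else fun=> 0.

Lemma refl_prod_affine d s x : refl_prod d s x = x *m reflmx_prod s + refl_prod d s 0.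
Proof.
elim: s x => [|i s IHs] x /=; first by rewrite mulmx1 addr0.
by rewrite -/(refl_prod d s) IHs [refl_prod d s 0]IHs mul0mx add0r !reflE mulmxDl mulmxA addrA.
Qed.

Lemma refl_prod0 s x : refl_prod (fun=> 0) s x = x *m reflmx_prod s.
Proof. by elim: s => [|i s IHs] /=; rewrite ?mulmx1 // -/(refl_prod _ s) IHs refl0E mulmxA. Qed.

Lemma refl_coef0_linear s k u l v j :
  refl_coef (fun=> 0) s (k *: u + l *: v) j =
  k * refl_coef (fun=> 0) s u j + l * refl_coef (fun=> 0) s v j.
Proof.
elim: s => [|i s IHs] /=; first by rewrite !mulr0 addr0.
case: (j == i) => //; rewrite -!/(refl_prod _ s) !refl_prod0 !subr0.
by rewrite mulmxDl -!scalemxAl dotvDl !dotvZl mulrDl !mulrA.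
Qed.

Lemma refl_prod_fix d s x : (forall i, dotv x (b i) = d i) -> refl_prod d s x = x.
Proof. by move=> xb; elim: s => [|i s IHs] //=; rewrite -/(refl_prod d s) IHs refl_fix. Qed.

Lemma refl_coef_notin d s x j : j \notin s -> refl_coef d s x j = 0.
Proof.
elim: s => [|i s IHs] //=; rewrite in_cons negb_or => /andP[/negbTE -> /IHs //].
Qed.

Lemma big_refl_coef_cons (V : zmodType) (F : I -> R -> V) d i s x :
  (forall j, F j 0 = 0) -> i \notin s ->
  \sum_j F j (refl_coef d (i :: s) x j) =
  F i (refl_coef d (i :: s) x i) + \sum_j F j (refl_coef d s x j).
Proof.
move=> F0 si; rewrite (bigD1 i) //= [in RHS](bigD1 i) //= refl_coef_notin // F0 add0r.
by congr (_ + _); apply: eq_bigr => j /negbTE ->.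
Qed.

Lemma refl_prodE d s x : uniq s ->
  refl_prod d s x = x - 2 *: \sum_j refl_coef d s x j *: b j.
Proof.
elim: s => [_|i s IHs]; last rewrite cons_uniq => /andP[si us].
  by rewrite big1 ?scaler0 ?subr0 // => j _; rewrite scale0r.
rewrite (@big_refl_coef_cons _ (fun j k => k *: b j)) //; last by move=> j; rewrite scale0r.
by rewrite /= eqxx -/(refl_prod d s) /refl IHs // scalerDr opprD addrA addrAC scalerA mulrA.
Qed.

Lemma refl_coef_energy d s x : (forall i, b i != 0) -> uniq s ->
  \sum_j refl_coef d s x j * (dotv x (b j) - d j) =
  dotv (\sum_j refl_coef d s x j *: b j) (\sum_j refl_coef d s x j *: b j).
Proof.
move=> b0; elim: s => [_|i s IHs]; last rewrite cons_uniq => /andP[si us].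
  by rewrite !big1 ?dotv0l // => j _; rewrite ?scale0r ?mul0r.
rewrite (@big_refl_coef_cons _ (fun j k => k * (dotv x (b j) - d j))) //; last first.
  by move=> j; rewrite mul0r.
rewrite (@big_refl_coef_cons _ (fun j k => k *: b j)) //; last by move=> j; rewrite scale0r.
rewrite IHs //= eqxx -/(refl_prod d s) refl_prodE //.
set S := \sum_j _; set G := dotv (b i) (b i); set l := _ / G.
have G0 : G != 0 by rewrite dotv_eq0.
have lG : l * G = dotv x (b i) - 2 * dotv S (b i) - d i.
  by rewrite /l mulfVK // dotvBl dotvZl.
rewrite !(dotvDl, dotvDr, dotvZl, dotvZr) (dotvC (b i) S) -/G.
have -> : dotv x (b i) - d i = l * G + 2 * dotv S (b i) by rewrite lG; ring.
ring.
Qed.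

Lemma refl_coef_eq0 d s x : (forall i, b i != 0) -> uniq s ->
  (forall j, refl_coef d s x j = 0) -> forall j, j \in s -> dotv x (b j) = d j.
Proof.
move=> b0; elim: s => [//|i s IHs]; rewrite cons_uniq => /andP[si us] coef0.
have coef0s j : refl_coef d s x j = 0.
  case: (eqVneq j i) => [->|ji]; first exact: refl_coef_notin.
  by have := coef0 j; rewrite /= (negbTE ji).
have fix_s : refl_prod d s x = x.
  by rewrite refl_prodE // big1 ?scaler0 ?subr0 // => j _; rewrite coef0s scale0r.
move=> j; rewrite in_cons => /orP[/eqP ->|]; last exact: IHs.
have /eqP := coef0 i; rewrite /= eqxx -/(refl_prod d s) fix_s mulf_eq0 invr_eq0 dotv_eq0.
rewrite (negbTE (b0 i)) orbF.
by rewrite subr_eq0 => /eqP.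
Qed.

Lemma refl_prod_fixed d s x : (forall i, b i != 0) -> uniq s -> refl_prod d s x = x ->
  \sum_j refl_coef d s x j *: b j = 0 /\ \sum_j refl_coef d s x j * d j = 0.
Proof.
move=> b0 us; rewrite refl_prodE // => /eqP.
rewrite subr_eq addrC -subr_eq subrr eq_sym scaler_eq0 pnatr_eq0 /= => /eqP S0.
split=> //; have := refl_coef_energy d s x b0 us; rewrite S0 dotv0l.
rewrite dotv_sum_affine S0 dotv0r sub0r.
by move=> /eqP; rewrite oppr_eq0 => /eqP.
Qed.

End ReflectionProducts.

Arguments refl_prod_fixed {R n I b d s x}.
Arguments refl_coef_eq0 {R n I b d s x}.

Section AugmentedVectors.
Context {R : realType} {n : nat} {I : finType}.
Implicit Types (b : I -> 'rV[R]_n) (d : I -> R).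

(* The augmented vectors [(b i, - d i)] of [R^(n+1)] are linearly independent, resp. spanning. *)
Definition augmented_free b d := forall l : I -> R,
  \sum_i l i *: b i = 0 -> \sum_i l i * d i = 0 -> forall i, l i = 0.

Definition augmented_full b d := forall (e : R) (y : 'rV[R]_n),
  (forall i, dotv y (b i) = d i * e) -> e = 0 /\ y = 0.

End AugmentedVectors.

Section Steinberg.
Context {R : realType} {n : nat} {I : finType}.
Context {b : I -> 'rV[R]_n} {d : I -> R} {s : seq I}.
Hypotheses (b0 : forall i, b i != 0) (us : uniq s) (s_all : forall i, i \in s).
Hypotheses (bd_free : augmented_free b d) (bd_full : augmented_full b d).

Let on_mirrors {d' x} : refl_prod b d' s x = x ->
  \sum_j refl_coef b d' s x j * d j = 0 -> forall i, dotv x (b i) = d' i.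
Proof.
move=> /(refl_prod_fixed b0 us)[Sb _] Sd i.
exact: refl_coef_eq0 b0 us (bd_free _ Sb Sd) _ (s_all i).
Qed.

Lemma refl_prod_hyperbolic : hyperbolic (refl_prod b d s).
Proof.
move=> x; apply/eqP => fix_x; have [_ Sd] := refl_prod_fixed b0 us fix_x.
have [/eqP] : 1 = 0 :> R /\ x = 0.
  by apply: bd_full => i; rewrite mulr1 (on_mirrors fix_x Sd).
by rewrite oner_eq0.
Qed.

(* A linear form that vanishes on no nonzero fixed vector of the linear part, which is
   therefore at most a line. *)
Let coef_d u := \sum_j refl_coef b (fun=> 0) s u j * d j.

Let coef_dD k u l v : coef_d (k *: u + l *: v) = k * coef_d u + l * coef_d v.
Proof.
rewrite /coef_d !mulr_sumr -big_split; apply: eq_bigr => j _.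
by rewrite refl_coef0_linear mulrDl !mulrA.
Qed.

Let fixed_coef_d0 u : u *m reflmx_prod b s = u -> coef_d u = 0 -> u = 0.
Proof.
rewrite -refl_prod0 => fix_u Sd; have [_ //] : 0 = 0 :> R /\ u = 0.
by apply: bd_full => i; rewrite mulr0 (on_mirrors fix_u Sd).
Qed.

Lemma reflmx_prod_fixed_line (u v : 'rV[R]_n) :
  u *m reflmx_prod b s = u -> v *m reflmx_prod b s = v -> v != 0 ->
  exists k, u = k *: v.
Proof.
move=> uQ vQ v0; have dv0 : coef_d v != 0 by apply: contra v0 => /eqP/(fixed_coef_d0 _ vQ) ->.
exists (coef_d u / coef_d v); apply: (scalerI dv0).
rewrite scalerA mulrCA mulfV // mulr1; apply/eqP; rewrite -subr_eq0 -scaleNr.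
apply/eqP/fixed_coef_d0; first by rewrite mulmxDl -!scalemxAl uQ vQ.
by rewrite coef_dD mulNr mulrC subrr.
Qed.

End Steinberg.

Section AugmentedMatrix.
Context {R : realType} {m n : nat}.
Implicit Types (b : 'I_m -> 'rV[R]_n) (d : 'I_m -> R).

Definition augmx b d : 'M[R]_(m, 1 + n) := row_mx (\col_i (- d i)) (\matrix_(i < m) b i).

Lemma mul_row_augmx b d (l : 'I_m -> R) :
  (\row_i l i) *m augmx b d = row_mx (- \sum_i l i * d i)%:M (\sum_i l i *: b i).
Proof.
rewrite mul_mx_row; congr row_mx.
  apply/rowP => j; rewrite ord1 !mxE -sumrN /=; apply: eq_bigr => i _.
  by rewrite !mxE mulrN.
by rewrite mulmx_sum_row; apply: eq_bigr => i _; rewrite rowK mxE.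
Qed.

Lemma mul_augmx_tr b d (e : R) (y : 'rV[R]_n) :
  row_mx e%:M y *m (augmx b d)^T = \row_i (dotv y (b i) - d i * e).
Proof.
rewrite tr_row_mx mul_row_col; apply/rowP => i; rewrite !mxE big_ord1 !mxE eqxx mulr1n.
rewrite dotvE addrC mulrC mulNr; congr (_ - _); apply: eq_bigr => j _.
by rewrite !mxE.
Qed.

Lemma augmented_freeP b d : augmented_free b d <-> row_free (augmx b d).
Proof.
split=> [bd_free|/mulmx_free_eq0 bd_free l Sb Sd i].
  apply/inj_row_free => v.
  have -> : v = \row_i v 0 i by apply/rowP => i; rewrite mxE.
  rewrite mul_row_augmx -row_mx0 => /eq_row_mx[/matrixP/(_ 0 0)] + Sb.
  rewrite !mxE eqxx mulr1n => /eqP; rewrite oppr_eq0 => /eqP Sd.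
  by apply/rowP => i; rewrite !mxE (bd_free _ Sb Sd).
have /eqP : \row_i l i *m augmx b d = 0 by rewrite mul_row_augmx Sd Sb oppr0 raddf0 row_mx0.
by rewrite bd_free => /eqP/rowP/(_ i); rewrite !mxE.
Qed.

Lemma augmented_fullP b d : augmented_full b d <-> row_full (augmx b d).
Proof.
rewrite /row_full -mxrank_tr -/(row_free _).
split=> [bd_full|/mulmx_free_eq0 bd_full e y bdy].
  apply/inj_row_free => v; rewrite -(hsubmxK v) [lsubmx v]mx11_scalar mul_augmx_tr.
  move=> /rowP bdv; have [-> ->] : lsubmx v 0 0 = 0 /\ rsubmx v = 0.
    by apply: bd_full => i; apply/eqP; rewrite -subr_eq0; have := bdv i; rewrite !mxE => ->.
  by rewrite raddf0 row_mx0.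
have /eqP : row_mx e%:M y *m (augmx b d)^T = 0.
  by rewrite mul_augmx_tr; apply/rowP => i; rewrite !mxE bdy subrr.
rewrite bd_full -row_mx0 => /eqP/eq_row_mx[/matrixP/(_ 0 0)]; rewrite !mxE eqxx mulr1n.
by move=> -> ->.
Qed.

End AugmentedMatrix.

Lemma augmented_full_free {R : realType} {n : nat} (b : 'I_n.+1 -> 'rV[R]_n) d :
  augmented_full b d <-> augmented_free b d.
Proof. by rewrite augmented_fullP augmented_freeP. Qed.

Lemma corank1_kernel {R : realType} {m n : nat} (A : 'M[R]_(m, n)) : (\rank A).+1 = n ->
  exists2 v : 'rV[R]_n, v != 0 & forall l, (l <= A)%MS = (dotv l v == 0).
Proof.
move=> rkA; have /rowV0Pn[v /sub_kermxP vAt v0] : kermx A^T != 0.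
  by rewrite -mxrank_eq0 mxrank_ker mxrank_tr; lia.
exists v => // l; rewrite -sub_kermx_tr.
have AK : (A <= kermx v^T)%MS by apply/sub_kermxP; rewrite -[A]trmxK -trmx_mul vAt trmx0.
have rkK : \rank (kermx v^T) = \rank A by rewrite mxrank_ker mxrank_tr rank_rV v0; lia.
have [_] := mxrank_leqif_sup AK; rewrite rkK eqxx => KA.
by apply/idP/idP => lsub; apply: submx_trans lsub _; rewrite // -KA.
Qed.

Section FixpointFreeAffine.
Context {R : realType} {n : nat}.
Context {Q : 'M[R]_n} {t : 'rV[R]_n} {w : 'rV[R]_n -> 'rV[R]_n}.
Hypotheses (wE : forall x, w x = x *m Q + t) (w_hyp : hyperbolic w).
Hypothesis Q_fixed_line : forall u v : 'rV[R]_n,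
  u *m Q = u -> v *m Q = v -> v != 0 -> exists k, u = k *: v.

Let A := Q - 1%:M.

Let displacementE x : w x - x = x *m A + t.
Proof. by rewrite wE /A mulmxBr mulmx1 addrAC. Qed.

Let fixedE (u : 'rV[R]_n) : (u *m A == 0) = (u *m Q == u).
Proof. by rewrite /A mulmxBr mulmx1 subr_eq0. Qed.

Let t_notin : ~~ (t <= A)%MS.
Proof.
apply/submxP => -[y ty]; have /eqP[] := w_hyp (- y).
by apply/eqP; rewrite -subr_eq0 displacementE ty mulNmx addNr.
Qed.

Let rank_lt : (\rank A < n)%N.
Proof.
rewrite ltn_neqAle rank_leq_col andbT; apply: contra t_notin => /eqP rkA.
by apply: submx_full; rewrite /row_full rkA.
Qed.

Let fixed_line :
  exists2 v0 : 'rV[R]_n, v0 != 0 & forall u, u *m A = 0 <-> exists k, u = k *: v0.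
Proof.
have /rowV0Pn[v0 /sub_kermxP/eqP v0A v00] : kermx A != 0.
  by rewrite -mxrank_eq0 mxrank_ker subn_eq0 -ltnNge rank_lt.
exists v0 => // u; split=> [/eqP uA|[k ->]]; last by rewrite -scalemxAl (eqP v0A) scaler0.
by apply: Q_fixed_line => //; apply/eqP; rewrite -fixedE.
Qed.

Let rank_displacement : (\rank A).+1 = n.
Proof.
have [v0 v00 kerE] := fixed_line.
have ker_sub : (kermx A <= v0)%MS.
  apply/row_subP => i; have [|k ->] := (kerE (row i (kermx A))).1.
    by rewrite -row_mul mulmx_ker row0.
  exact/scalemx_sub/submx_refl.
have := mxrankS ker_sub; rewrite mxrank_ker rank_rV v00.
by have := rank_lt; lia.
Qed.

Lemma Mov_nonlinear_hyperplane : nonlinear_affine_hyperplane (Mov w).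
Proof.
have [v v0 subAE] := corank1_kernel _ rank_displacement.
exists v, (dotv t v); split=> //; first by rewrite -subAE.
apply/seteqP; split=> l /=.
  case=> x _ <-; have /eqP xAv : dotv (x *m A) v == 0 by rewrite -subAE submxMl.
  by rewrite displacementE dotvDl xAv add0r.
move=> lv; have /submxP[x lt] : (l - t <= A)%MS by rewrite subAE dotvBl lv subrr.
by exists x => //; rewrite displacementE -lt subrK.
Qed.

Lemma MinSet_line : is_line (MinSet w).
Proof.
have [v [c [v0 _ MovE]]] := Mov_nonlinear_hyperplane.
set mu := (c / dotv v v) *: v.
have MinE x : MinSet w x <-> w x - x = mu by rewrite /MinSet /= MovE; exact: shortest_in_hyperplane.
have [x1 _ x1E] : Mov w mu.
  by rewrite MovE /= dotvZl mulfVK // dotv_eq0.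
have [v1 v10 kerE] := fixed_line.
have v1A : v1 *m A = 0 by apply/kerE; exists 1; rewrite scale1r.
exists x1, v1; split=> //; apply/seteqP; split=> x /=.
  move/MinE => xE; have [|k xk] := (kerE (x - x1)).1.
    by rewrite mulmxBl -[x *m A](addrK t) -[x1 *m A](addrK t) -!displacementE xE x1E subrr.
  by exists k => //; rewrite -xk addrC subrK.
case=> k _ <-; apply/MinE.
by rewrite displacementE mulmxDl -scalemxAl v1A scaler0 addr0 -displacementE.
Qed.

End FixpointFreeAffine.

Section ReflectionLength.
Context {R : realType} {n : nat}.

Lemma nonlinear_hyperplane_full (S : set 'rV[R]_n) m (N : 'M[R]_(m, n)) :
  nonlinear_affine_hyperplane S -> (forall l, S l -> (l <= N)%MS) -> row_full N.
Proof.
move=> [v [c [v0 c0 ->]]] SN; set mu := (c / dotv v v) *: v.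
have vv0 : dotv v v != 0 by rewrite dotv_eq0.
have mu_in : dotv mu v = c by rewrite dotvZl mulfVK.
have KN : (kermx v^T <= N)%MS.
  apply/rV_subP => u; rewrite sub_kermx_tr => /eqP uv.
  rewrite -(addKr mu u) addrC; apply: addmx_sub; first by apply: SN; rewrite /= dotvDl uv addr0.
  by rewrite -scaleN1r; apply/scalemx_sub/SN.
have [_] := mxrank_leqif_sup KN.
have /negbTE -> : ~~ (N <= kermx v^T)%MS.
  apply: contraNN c0 => NK; rewrite -mu_in -sub_kermx_tr.
  exact: submx_trans (SN _ mu_in) NK.
move/eqP; rewrite /row_full mxrank_ker mxrank_tr rank_rV v0.
by have := rank_leq_col N; have := mxrankS KN; rewrite mxrank_ker mxrank_tr rank_rV v0; lia.
Qed.

Lemma row_free_common_point k (b : 'I_k -> 'rV[R]_n) (d : 'I_k -> R) :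
  row_free (\matrix_(j < k) b j) -> exists x, forall j, dotv x (b j) = d j.
Proof.
rewrite /row_free -mxrank_tr => /eqP rk.
have /submxP[x dE] : (\row_j d j <= (\matrix_(j < k) b j)^T)%MS.
  by apply: submx_full; rewrite /row_full rk.
exists x => j; have /rowP/(_ j) := dE; rewrite mxE => ->.
by rewrite dotvE !mxE; apply: eq_bigr => i _; rewrite !mxE.
Qed.

Lemma reflection_length_ge (w : 'rV[R]_n -> 'rV[R]_n) k (t : 'I_k -> 'rV[R]_n -> 'rV[R]_n) :
  hyperbolic w -> nonlinear_affine_hyperplane (Mov w) ->
  (forall j, is_reflection (t j)) -> w = prodfun t -> (n.+1 <= k)%N.
Proof.
move=> w_hyp Mov_hyp t_refl wt.
have /choice[bd tE] j : exists bd : 'rV[R]_n * R, bd.1 != 0 /\ t j = refl bd.1 bd.2.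
  by have [b [d [b0 ->]]] := t_refl j; exists (b, d).
set b := fun j => (bd j).1; set d := fun j => (bd j).2.
have wE : w = refl_prod b d (enum 'I_k).
  by rewrite wt /prodfun (_ : t = fun j => refl (b j) (d j)) //; apply: funext => j; case: (tE j).
set N := \matrix_(j < k) b j.
have MovN l : Mov w l -> (l <= N)%MS.
  case=> x _ <-; rewrite wE refl_prodE ?enum_uniq // addrAC subrr add0r.
  set l' := \row_j refl_coef b d (enum 'I_k) x j.
  have -> : \sum_j refl_coef b d (enum 'I_k) x j *: b j = l' *m N.
    by rewrite mulmx_sum_row; apply: eq_bigr => j _; rewrite rowK mxE.
  by rewrite -scaleNr scalemxAl submxMl.
have /eqP rkN := nonlinear_hyperplane_full _ _ _ Mov_hyp MovN.
rewrite ltnNge; apply/negP => kn.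
have [x0 x0E] : exists x0, forall j, dotv x0 (b j) = d j.
  by apply: row_free_common_point; rewrite -/N /row_free; have := rank_leq_row N; lia.
by have /eqP[] := w_hyp x0; rewrite wE refl_prod_fix.
Qed.

End ReflectionLength.

Section CoxeterGroup.
Context {R : realType} {n : nat}.
Implicit Types (a b : 'I_n.+1 -> 'rV[R]_n) (c d : 'I_n.+1 -> R).

Lemma bounded_no_ray {S : set 'rV[R]_n} {M : R} {z u : 'rV[R]_n} :
  (forall x, S x -> dotv x x <= M) -> u != 0 -> (forall k, 0 <= k -> S (z + k *: u)) -> False.
Proof.
move=> SM u0 ray; have G0 : 0 < dotv u u by rewrite dotv_gt0.
set G := dotv u u in G0; set B := dotv z u; set C := `|2 * B| + `|M| + 1.
have C0 : 0 < C by rewrite /C -addrA ltr_pwDr ?ltr_wpDl ?normr_ge0.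
(* [k >= 1] and [k G >= C] give [|z + k u|^2 >= k (k G - |2 B|) >= k (|M| + 1) > M]. *)
set k := C / G + 1.
have k1 : 1 <= k by rewrite lerDr divr_ge0 // ltW.
have kG : C <= k * G by rewrite mulrDl mulfVK ?gt_eqF // mul1r lerDl ltW.
have k0 : 0 <= k := le_trans ler01 k1.
have h1 : 0 <= k * (k * G - C) by rewrite mulr_ge0 // subr_ge0.
have h2 : k * (- (2 * B)) <= k * `|2 * B| by rewrite ler_wpM2l // -normrN ler_norm.
have h3 : 0 <= (k - 1) * (`|M| + 1) by rewrite mulr_ge0 ?subr_ge0 ?addr_ge0.
have := SM _ (ray k k0); rewrite !(dotvDl, dotvDr, dotvZl, dotvZr) (dotvC u z) -/G -/B.
have := ler_norm M; have := dotv_ge0 z; rewrite /C in h1; nra.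
Qed.

Lemma simplex_recession {a c} {M : R} {x0 u : 'rV[R]_n} :
  (forall x, simplex_set a c x -> dotv x x <= M) -> simplex_set a c x0 ->
  (forall i, 0 <= dotv u (a i)) -> u = 0.
Proof.
move=> bounded x0_in u_ge0; case: (eqVneq u 0) => // u0; exfalso.
apply: (bounded_no_ray bounded u0) => k k0 i.
by rewrite dotvDl dotvZl ler_wpDr ?mulr_ge0.
Qed.

Lemma coxeter_simplex_full a c : coxeter_simplex a c -> augmented_full a c.
Proof.
case=> _ [x0 x0_int] [M bounded] _ e y ayc.
have x0_in : simplex_set a c x0 by move=> i; exact/ltW.
have e0 : e = 0.
  apply/eqP; apply: contraT => e0.
  set u := x0 - e^-1 *: y.
  have ua i : dotv u (a i) = dotv x0 (a i) - c i.
    by rewrite dotvBl dotvZl ayc mulrCA mulVf // mulr1.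
  have u0 : u = 0 by apply: (simplex_recession bounded x0_in) => i; rewrite ua subr_ge0 ltW.
  by have := x0_int ord0; rewrite -subr_gt0 -ua u0 dotv0l ltxx.
split=> //; apply: (simplex_recession bounded x0_in) => i.
by rewrite ayc e0 mulr0.
Qed.

End CoxeterGroup.

Section SimpleSystems.
Local Open Scope classical_set_scope.
Context {R : realType} {n : nat}.

Lemma inW_affine {a c} {g : 'rV[R]_n -> 'rV[R]_n} : inW a c g ->
  exists P (tau : 'rV[R]_n), forall y, g y = y *m P + tau.
Proof.
elim=> [|i f _ [P [tau fE]]]; first by exists 1%:M, 0 => y; rewrite mulmx1 addr0.
exists (P *m reflmx (a i)), (tau *m reflmx (a i) + (2 * c i / dotv (a i) (a i)) *: a i) => y /=.
by rewrite fE reflE mulmxDl mulmxA addrA.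
Qed.

Lemma inW_surj {a c} {g : 'rV[R]_n -> 'rV[R]_n} : (forall i, a i != 0) -> inW a c g ->
  forall x, exists y, g y = x.
Proof.
move=> a0; elim=> [|i f _ f_surj] x; first by exists x.
by have [y fy] := f_surj (refl (a i) (c i) x); exists y; rewrite /= fy reflK.
Qed.

Lemma affine_form_vanishing (a0 v : 'rV[R]_n) c0 e : a0 != 0 ->
  (forall y, dotv y a0 = c0 -> dotv y v = e) ->
  exists k, forall y, dotv y v - e = k * (dotv y a0 - c0).
Proof.
move=> a00 vanish; have aa0 : dotv a0 a0 != 0 by rewrite dotv_eq0.
set k := dotv v a0 / dotv a0 a0; set y0 := (c0 / dotv a0 a0) *: a0.
have y0_in : dotv y0 a0 = c0 by rewrite dotvZl mulfVK.
set u := v - k *: a0.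
have ua : dotv u a0 = 0 by rewrite dotvBl dotvZl mulfVK // subrr.
have uv : dotv u v = 0.
  have := vanish (y0 + u); rewrite [dotv _ a0]dotvDl [dotv _ v]dotvDl y0_in ua addr0.
  by rewrite (vanish y0 y0_in) => /(_ erefl)/(canRL (addKr e)); rewrite addNr.
have : u == 0 by rewrite -dotv_eq0 {2}/u dotvBr uv dotvZr ua mulr0 subr0.
rewrite /u subr_eq0 => /eqP vE.
by exists k => y; rewrite -(vanish y0 y0_in) vE !dotvZr y0_in mulrBr.
Qed.

Lemma affine_hyperplane_rescale (g : 'rV[R]_n -> 'rV[R]_n) P (tau a0 b0 : 'rV[R]_n) c0 d0 :
  (forall y, g y = y *m P + tau) -> (forall x, exists y, g y = x) -> a0 != 0 -> b0 != 0 ->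
  (forall y, dotv y a0 = c0 -> dotv (g y) b0 = d0) ->
  exists k, k != 0 /\ forall y, dotv (g y) b0 - d0 = k * (dotv y a0 - c0).
Proof.
move=> gE g_surj a00 b00 gH.
have gform y : dotv (g y) b0 - d0 = dotv y (b0 *m P^T) - (d0 - dotv tau b0).
  by rewrite gE dotvDl dotv_mulmx opprB addrA.
have [k kE] : exists k, forall y,
    dotv y (b0 *m P^T) - (d0 - dotv tau b0) = k * (dotv y a0 - c0).
  by apply: affine_form_vanishing a00 _ => y /gH gyH; apply/eqP; rewrite -subr_eq0 -gform gyH subrr.
exists k; split=> [|y]; last by rewrite gform kE.
apply: contra b00 => /eqP k0.
have onH x : dotv x b0 = d0.
  by have [y <-] := g_surj x; apply/eqP; rewrite -subr_eq0 gform kE k0 mul0r.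
by rewrite -dotv_eq0 onH -(onH 0) dotv0l.
Qed.

Lemma augmented_free_rescale {I : finType} {a b : I -> 'rV[R]_n} {c d k : I -> R}
    {g : 'rV[R]_n -> 'rV[R]_n} :
  (forall i, k i != 0) -> (forall i y, dotv (g y) (b i) - d i = k i * (dotv y (a i) - c i)) ->
  augmented_free a c -> augmented_free b d.
Proof.
move=> k0 gk ac_free l Sb Sd i.
have vanish y : \sum_j (l j * k j) * (dotv y (a j) - c j) = 0.
  transitivity (\sum_j l j * (dotv (g y) (b j) - d j)).
    by apply: eq_bigr => j _; rewrite gk mulrA.
  by rewrite dotv_sum_affine Sb Sd dotv0r subrr.
have Sc : \sum_j (l j * k j) * c j = 0.
  by have /eqP := vanish 0; rewrite dotv_sum_affine dotv0l sub0r oppr_eq0 => /eqP.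
have Sa : \sum_j (l j * k j) *: a j = 0.
  apply/eqP; rewrite -dotv_eq0; apply/eqP.
  by have := vanish (\sum_j (l j * k j) *: a j); rewrite dotv_sum_affine Sc subr0.
by have /eqP := ac_free _ Sa Sc i; rewrite mulf_eq0 (negbTE (k0 i)) orbF => /eqP.
Qed.

Lemma simple_system_refl {a : 'I_n.+1 -> 'rV[R]_n} {c s} :
  coxeter_simplex a c -> simple_system a c s ->
  exists b d, [/\ forall i, b i != 0, forall i, s i = refl (b i) (d i) & augmented_free b d].
Proof.
move=> simplex [g [gW sH]].
have a0 i : a i != 0 by case: simplex => a1 _ _ _; rewrite -dotv_eq0 a1 oner_eq0.
have [P [tau gE]] := inW_affine gW.
have /choice[bd bdE] i : exists bd : 'rV[R]_n * R, [/\ bd.1 != 0, s i = refl bd.1 bd.2 &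
    forall y, dotv y (a i) = c i -> dotv (g y) bd.1 = bd.2].
  have [b [d [b0 sE HE]]] := sH i; exists (b, d); split=> // y yH.
  by have : [set x | dotv x b = d] (g y) by rewrite HE; exists y.
set b := fun i => (bd i).1; set d := fun i => (bd i).2.
have /choice[k kE] i : exists k, k != 0 /\
    forall y, dotv (g y) (b i) - d i = k * (dotv y (a i) - c i).
  by case: (bdE i) => b0 _ gH; apply: affine_hyperplane_rescale gE (inW_surj a0 gW) (a0 i) b0 gH.
exists b, d; split=> [i|i|]; try by case: (bdE i).
apply: (augmented_free_rescale (fun i => (kE i).1) (fun i => (kE i).2)).
exact/augmented_full_free/coxeter_simplex_full.
Qed.

End SimpleSystems.

Theorem proposition7p2 (R : realType) (n : nat) (a : 'I_n.+1 -> 'rV[R]_n)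
  (c : 'I_n.+1 -> R) (w : 'rV[R]_n -> 'rV[R]_n) :
  (0 < n)%N ->
  coxeter_simplex a c ->
  irreducible_simplex a ->
  coxeter_element a c w ->
  [/\ hyperbolic w,
      nonlinear_affine_hyperplane (Mov w),
      is_line (MinSet w) &
      forall (s : 'I_n.+1 -> 'rV[R]_n -> 'rV[R]_n) (p : {perm 'I_n.+1}),
        simple_system a c s -> w = prodfun (fun i => s (p i)) ->
        forall (k : nat) (t : 'I_k -> 'rV[R]_n -> 'rV[R]_n),
          (forall j, is_reflection (t j)) -> w = prodfun t ->
          (n.+1 <= k)%N ].
Proof.
(* Irreducibility is automatic for a simplex, and [0 < n] follows from hyperbolicity. *)
move=> _ simplex _ [s [p [simple ->]]].
have [b [d [b0 sE bd_free]]] := simple_system_refl simplex simple.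
set sq := map p (enum 'I_n.+1).
have -> : prodfun (fun i => s (p i)) = refl_prod b d sq.
  by rewrite (funext sE) /prodfun /refl_prod /sq enumT foldr_map.
have uq : uniq sq by rewrite map_inj_uniq ?enum_uniq //; exact: perm_inj.
have sq_all i : i \in sq by apply/mapP; exists ((p^-1)%g i); rewrite ?mem_enum ?permKV.
have bd_full : augmented_full b d by apply/augmented_full_free.
have w_hyp : hyperbolic (refl_prod b d sq) := refl_prod_hyperbolic b0 uq sq_all bd_free bd_full.
have wE := refl_prod_affine b d sq.
have Q_line := reflmx_prod_fixed_line b0 uq sq_all bd_free bd_full.
have Mov_hyp := Mov_nonlinear_hyperplane wE w_hyp Q_line.
split=> //; first exact: MinSet_line wE w_hyp Q_line.
by move=> _ _ _ _ k t t_refl wt; apply: reflection_length_ge w_hyp Mov_hyp t_refl wt.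
Qed.
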